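(* For all $r,s\ge1$, as an identity of polynomials in $q$, $$\sum_{C\ \text{maximal}}(q-1)^{r+s-l(C)-1}=\sum_{m=0}^{\min(r-1,s-1)}\binom{r-1}{m}\binom{s-1}{m}q^{m},$$ where the sum runs over all maximal cells $C$ for $(r,s)$.
   Context: A cell (for given $r,s$) is a finite (possibly empty) sequence of distinct pairs $(i_1,j_1),\dots,(i_l,j_l)$ with $1\le i_k\le r$, $1\le j_k\le s$, $i_1\le\cdots\le i_l$ and $j_1\le\cdots\le j_l$; $l(C)=l$ is its length. The cell is maximal if $\{i_1,\dots,i_l\}=\{1,\dots,r\}$ and $\{j_1,\dots,j_l\}=\{1,\dots,s\}$. *)

From HB Require Import structures.
From mathcomp Require Import all_boot all_order all_algebra.
Set Implicit Arguments. Unset Strict Implicit. Unset Printing Implicit Defensive.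
Import Order.TTheory GRing.Theory Num.Theory.

(* Indices are 0-based: row i+1 of the paper is (i : 'I_r), column j+1 is (j : 'I_s). *)

Definition is_cell (r s : nat) (c : seq ('I_r * 'I_s)) : bool :=
  [&& uniq c,
      sorted leq [seq val p.1 | p <- c] &
      sorted leq [seq val p.2 | p <- c]].

Definition is_maximal_cell (r s : nat) (c : seq ('I_r * 'I_s)) : bool :=
  [&& is_cell c,
      [forall i : 'I_r, i \in [seq p.1 | p <- c]] &
      [forall j : 'I_s, j \in [seq p.2 | p <- c]]].

From HB Require Import structures.
From mathcomp Require Import all_boot all_order all_algebra.
From mathcomp Require Import zify ring.
Import Order.TTheory GRing.Theory Num.Theory.

(* A maximal cell is the same thing as a lattice path from (0, 0) to
   (r-1, s-1) with steps (1, 0), (0, 1) and (1, 1): sortedness of both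
   coordinate sequences together with the covering of every row and every
   column forces each coordinate to grow by at most one at each step.  A cell
   of length l has l - 1 steps, hence r + s - 1 - l diagonal ones, so the left
   side sums (q - 1)^(number of diagonal steps) over these paths.  Removing the
   first step shows that this weighted count P(a, b), for a = r-1 and b = s-1,
   satisfies P(a+1, b+1) = P(a, b+1) + P(a+1, b) + (q - 1) P(a, b) with
   P(a, 0) = P(0, b) = 1; by Pascal's rule so does sum_m C(a,m) C(b,m) q^m. *)

Lemma big_tuple_cons {R : Type} {idx : R} {op : Monoid.com_law idx}
    {T : finType} {l} (F : seq T -> R) :
  \big[op/idx]_(t : l.+1.-tuple T) F t
    = \big[op/idx]_(x : T) \big[op/idx]_(t : l.-tuple T) F (x :: t).
Proof.
rewrite pair_big /= (reindex (fun p : T * l.-tuple T => [tuple of p.1 :: p.2])) //=.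
exists (fun t : l.+1.-tuple T => (thead t, [tuple of behead t])).
  by move=> [x t] _ /=; congr pair; apply: val_inj.
by move=> t _; rewrite [t in RHS]tuple_eta.
Qed.

Lemma big_tuple0 {R : Type} {idx : R} {op : Monoid.law idx} {T : finType}
    (F : seq T -> R) :
  \big[op/idx]_(t : 0.-tuple T) F t = F [::].
Proof. by rewrite (big_pred1 [tuple]) // => t; rewrite [t]tuple0 /= eqxx. Qed.

Lemma sorted_head_leq {x : nat} {u k} :
  sorted leq (x :: u) -> k \in x :: u -> x <= k.
Proof.
move=> /= hp; rewrite inE => /orP [/eqP -> //|hk].
by have /allP := order_path_min leq_trans hp; apply.
Qed.

Lemma sorted_leq_last {x : nat} {u k} :
  sorted leq (x :: u) -> k \in x :: u -> k <= last x u.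
Proof.
elim: u x k => [|y u IH] x k /=; first by rewrite inE => _ /eqP ->.
move=> /andP [hxy hp]; rewrite inE => /orP [/eqP ->|hk]; last exact: IH.
exact: leq_trans hxy (IH y y hp (mem_head _ _)).
Qed.

Definition unit_step : rel nat := fun m n => m <= n <= m.+1.

Lemma unit_step_path_sorted x u : path unit_step x u -> sorted leq (x :: u).
Proof. by apply: sub_path => m n /andP []. Qed.

Lemma unit_step_path_mem x u k :
  path unit_step x u -> x <= k <= last x u -> k \in x :: u.
Proof.
elim: u x => [|y u IH] x /=; first by move=> _ hk; rewrite mem_seq1; apply/eqP; lia.
move=> /andP [/andP [hxy hyx] hp] hk; rewrite inE.
case: (eqVneq k x) => //= hkx; apply: IH => //; lia.
Qed.

Lemma sorted_gapless_unit_step_path x u :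
  sorted leq (x :: u) -> (forall k, x <= k <= last x u -> k \in x :: u) ->
  path unit_step x u.
Proof.
elim: u x => [|y u IH] x //= /andP [hxy hp] hcov.
have hy_min k : k \in y :: u -> y <= k by apply: sorted_head_leq.
have hy_last : y <= last y u by apply: sorted_leq_last hp (mem_head _ _).
rewrite /unit_step hxy /=; apply/andP; split.
  rewrite leqNgt; apply/negP => hlt.
  have : x.+1 \in x :: y :: u by apply: hcov; lia.
  by rewrite inE eqn_leq ltnn => /hy_min; lia.
apply: IH => // k /andP [hyk hk].
have : k \in x :: y :: u by apply: hcov; lia.
rewrite inE => /orP [/eqP ekx|//].
have -> : k = y by lia.
exact: mem_head.
Qed.

Lemma sorted_cover_unit_step_path {n x u} : all (gtn n) (x :: u) ->
  sorted leq (x :: u) /\ (forall k, k < n -> k \in x :: u) <->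
  [/\ x = 0, last x u = n.-1 & path unit_step x u].
Proof.
move=> /allP hlt; have hx : x < n := hlt x (mem_head _ _); split.
  move=> [hs hcov]; have hlast : last x u < n := hlt _ (mem_last x u).
  have x0 : x = 0 by have := sorted_head_leq hs (hcov 0 ltac:(lia)); lia.
  have xn : last x u = n.-1 by have := sorted_leq_last hs (hcov n.-1 ltac:(lia)); lia.
  split=> //; apply: sorted_gapless_unit_step_path => // k /andP [_ hk].
  by apply: hcov; lia.
move=> [x0 xn hp]; split; first exact: unit_step_path_sorted.
by move=> k hk; apply: unit_step_path_mem; lia.
Qed.

Lemma ord_cover_unit_step_pathE {T : Type} {n} (f : T -> 'I_n) x (u : seq T) :
  sorted leq [seq val (f p) | p <- x :: u]
    && [forall i, i \in [seq f p | p <- x :: u]] =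
  [&& val (f x) == 0, val (f (last x u)) == n.-1
    & path unit_step (val (f x)) [seq val (f p) | p <- u]].
Proof.
have hall : all (gtn n) [seq val (f p) | p <- x :: u].
  by elim: (x :: u) => //= p v ->; rewrite andbT; apply: ltn_ord.
have hcov : reflect (forall k, k < n -> k \in [seq val (f p) | p <- x :: u])
                    [forall i, i \in [seq f p | p <- x :: u]].
  rewrite (map_comp val f); apply: (iffP forallP) => [h k hk|h i].
    by have := h (Ordinal hk); rewrite -(mem_map val_inj).
  by rewrite -(mem_map val_inj); apply: h; apply: ltn_ord.
have [hto hfrom] := sorted_cover_unit_step_path hall.
rewrite (last_map (fun p => val (f p))) in hto hfrom.
apply/andP/and3P => [[hs /hcov hc]|[/eqP x0 /eqP xl hp]].
  by have [-> -> ->] := hto (conj hs hc).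
by have [hs hc] := hfrom (And3 x0 xl hp); split=> //; apply/hcov.
Qed.

(* [delannoy k a b] counts the lattice paths from (0, 0) to (a, b) made of k
   steps (1, 0), (0, 1) or (1, 1). *)
Fixpoint delannoy (k a b : nat) : nat :=
  if k is k'.+1 then
    (0 < a) * delannoy k' a.-1 b + (0 < b) * delannoy k' a b.-1
    + (0 < a) * (0 < b) * delannoy k' a.-1 b.-1
  else (a == 0) && (b == 0).

Lemma delannoy_eq0 k a b : a + b < k -> delannoy k a b = 0.
Proof.
elim: k a b => [|k IH] [|a] [|b] //= hk.
all: rewrite ?mul0n ?muln0 ?addn0 ?add0n ?mul1n !IH //; lia.
Qed.

Section MaximalCells.

Variables r s : nat.
Implicit Types (x y : 'I_r * 'I_s) (t : seq ('I_r * 'I_s)).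

Definition cell_step : rel ('I_r * 'I_s) :=
  fun x y => [&& unit_step (val x.1) (val y.1), unit_step (val x.2) (val y.2)
               & x != y].

Lemma cell_step_pathE x t :
  path cell_step x t =
  [&& uniq (x :: t), path unit_step (val x.1) [seq val p.1 | p <- t]
                   & path unit_step (val x.2) [seq val p.2 | p <- t]].
Proof.
apply/idP/and3P => [hp|[hu hp1 hp2]].
  split; last 2 first.
  - rewrite (@path_map _ _ (fun p => val p.1)).
    by apply: sub_path hp => a b /and3P [].
  - rewrite (@path_map _ _ (fun p => val p.2)).
    by apply: sub_path hp => a b /and3P [].
  apply: (@map_uniq _ _ (fun p => val p.1 + val p.2)).
  apply: (sorted_uniq ltn_trans ltnn).
  rewrite /= (@path_map _ _ (fun p => val p.1 + val p.2)).
  apply: sub_path hp => [[a1 a2] [b1 b2]] /and3P [/andP [h1 h1'] /andP [h2 h2']].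
  rewrite /= in h1 h1' h2 h2' *; rewrite xpair_eqE negb_and -!(inj_eq (@ord_inj _)).
  by move=> /orP [] /eqP ?; lia.
elim: t x hu hp1 hp2 => [|y t IH] x //= /andP [hxt hu] /andP [h1 p1] /andP [h2 p2].
rewrite IH // andbT /cell_step h1 h2 /=.
by apply: contraNneq hxt => ->; apply: mem_head.
Qed.

Definition is_top x := (val x.1 == r.-1) && (val x.2 == s.-1).

Lemma maximal_cellE x t :
  is_maximal_cell (x :: t) =
  [&& val x.1 == 0, val x.2 == 0, is_top (last x t) & path cell_step x t].
Proof.
rewrite /is_maximal_cell /is_cell cell_step_pathE /is_top.
have e1 := ord_cover_unit_step_pathE fst x t.
have e2 := ord_cover_unit_step_pathE snd x t.
rewrite -andbA andbACA e1 e2.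
by case: (uniq _); case: (val x.1 == 0); case: (val x.2 == 0);
   rewrite /= ?andbF // andbACA.
Qed.

Lemma sum_pair_pick i j (F : nat -> nat -> nat) :
  \sum_(y : 'I_r * 'I_s) ((y.1 == i :> nat) && (y.2 == j :> nat)) * F y.1 y.2
  = ((i < r) && (j < s)) * F i j.
Proof.
have [/andP [hi hj]|hij] := boolP ((i < r) && (j < s)).
  rewrite (bigD1 (Ordinal hi, Ordinal hj)) //= !eqxx mul1n big1 ?addn0 // => y hy.
  case: eqP => e1; case: eqP => e2 //=; case/eqP: hy.
  by move: y e1 e2 => [y1 y2] /= e1 e2; congr pair; apply: val_inj.
rewrite mul0n big1 // => y _; case: eqP => [e1|]; case: eqP => [e2|] //=.
by move: hij; rewrite -e1 -e2 !ltn_ord.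
Qed.

Lemma cell_stepE x y :
  cell_step x y =
    ((val y.1 == (val x.1).+1) && (val y.2 == val x.2))
    + ((val y.1 == val x.1) && (val y.2 == (val x.2).+1))
    + ((val y.1 == (val x.1).+1) && (val y.2 == (val x.2).+1)) :> nat.
Proof.
rewrite /cell_step /unit_step.
have -> : (x != y) = ~~ ((val y.1 == val x.1) && (val y.2 == val x.2)).
  by move: x y => [x1 x2] [y1 y2]; rewrite xpair_eqE !val_eqE eq_sym [y2 == _]eq_sym.
move: (val x.1) (val x.2) (val y.1) (val y.2) => a b c d.
by repeat (case: eqP => ? /=); repeat (case: leP => ? /=); lia.
Qed.

Definition ntop_paths l x : nat :=
  \sum_(t : l.-tuple ('I_r * 'I_s)) (path cell_step x t && is_top (last x t)).

Lemma ntop_pathsS l x :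
  ntop_paths l.+1 x = \sum_(y : 'I_r * 'I_s) cell_step x y * ntop_paths l y.
Proof.
rewrite /ntop_paths.
rewrite (big_tuple_cons (fun c => path cell_step x c && is_top (last x c) : nat)).
apply: eq_bigr => y _; rewrite big_distrr; apply: eq_bigr => t _ /=.
by case: (cell_step x y); rewrite ?mul1n ?mul0n.
Qed.

Lemma ntop_pathsE l x : ntop_paths l x = delannoy l (r.-1 - x.1) (s.-1 - x.2).
Proof.
elim: l x => [|l IH] x.
  rewrite /ntop_paths.
  rewrite (big_tuple0 (fun c => path cell_step x c && is_top (last x c) : nat)).
  rewrite /is_top /= !subn_eq0.
  by have := ltn_ord x.1; have := ltn_ord x.2; rewrite !eqn_leq; lia.
rewrite ntop_pathsS (eq_bigr _ (fun y _ => congr1 (muln _) (IH y))).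
under eq_bigr => y _ do rewrite cell_stepE !mulnDl.
rewrite !big_split /=.
rewrite !(sum_pair_pick _ _ (fun i j => delannoy l (r.-1 - i) (s.-1 - j))).
by rewrite !ltn_ord !subnS !subn_gt0 -!ltn_predRL andbT /= -mulnb.
Qed.

Lemma nmaximal_cells0 : 0 < r ->
  \sum_(c : 0.-tuple ('I_r * 'I_s)) is_maximal_cell c = 0.
Proof.
move=> hr; rewrite (big_tuple0 (fun c => is_maximal_cell c : nat)).
by apply/eqP; rewrite eqb0; apply/and3P => [[_ /forallP /(_ (Ordinal hr))]].
Qed.

Lemma nmaximal_cellsS k : 0 < r -> 0 < s ->
  \sum_(c : k.+1.-tuple ('I_r * 'I_s)) is_maximal_cell c = delannoy k r.-1 s.-1.
Proof.
move=> hr hs; rewrite (big_tuple_cons (fun c => is_maximal_cell c : nat)).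
transitivity (\sum_(x : 'I_r * 'I_s) ((x.1 == 0 :> nat) && (x.2 == 0 :> nat))
                * delannoy k (r.-1 - x.1) (s.-1 - x.2)).
  apply: eq_bigr => x _; rewrite -ntop_pathsE /ntop_paths big_distrr.
  apply: eq_bigr => t _ /=.
  by rewrite maximal_cellE andbA [is_top _ && _]andbC mulnb.
rewrite (sum_pair_pick _ _ (fun i j => delannoy k (r.-1 - i) (s.-1 - j))).
by rewrite hr hs !subn0 mul1n.
Qed.

End MaximalCells.

Local Open Scope ring_scope.

Lemma sum_delannoy_widen (V : nmodType) (F : nat -> V) a b n : (a + b < n)%N ->
  \sum_(k < n) F k *+ delannoy k a b = \sum_(k < (a + b).+1) F k *+ delannoy k a b.
Proof.
move=> hn; rewrite [RHS](big_ord_widen n (fun k => F k *+ delannoy k a b) hn).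
rewrite [RHS]big_mkcond /=; apply: eq_bigr => k _.
by case: ltnP => // hk; rewrite delannoy_eq0.
Qed.

Definition delannoy_poly a b : {poly int} :=
  \sum_(k < (a + b).+1) ('X - 1) ^+ (a + b - k) *+ delannoy k a b.

Lemma delannoy_poly00 : delannoy_poly 0 0 = 1.
Proof. by rewrite /delannoy_poly big_ord1. Qed.

Lemma delannoy_polyS a b n : (a + b = n.+1)%N ->
  delannoy_poly a b = \sum_(k < n.+1) ('X - 1) ^+ (n - k) *+ delannoy k.+1 a b.
Proof.
move=> e; rewrite /delannoy_poly e big_ord_recl /=.
have -> : (a == 0%N) && (b == 0%N) = false by apply/negbTE; lia.
by rewrite mulr0n add0r; apply: eq_bigr => k _; rewrite /bump /= !add0n add1n subSS.
Qed.

Lemma delannoy_polyS0 a : delannoy_poly a.+1 0 = delannoy_poly a 0.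
Proof.
rewrite (@delannoy_polyS _ _ a) ?addn0 // /delannoy_poly addn0.
by apply: eq_bigr => k _ /=; rewrite mul1n !mul0n !addn0.
Qed.

Lemma delannoy_poly0S b : delannoy_poly 0 b.+1 = delannoy_poly 0 b.
Proof.
rewrite (@delannoy_polyS _ _ b) // /delannoy_poly.
by apply: eq_bigr => k _ /=; rewrite !mul0n mul1n !add0n addn0.
Qed.

Lemma delannoy_polySS a b :
  delannoy_poly a.+1 b.+1
  = delannoy_poly a b.+1 + delannoy_poly a.+1 b + ('X - 1) * delannoy_poly a b.
Proof.
rewrite (@delannoy_polyS _ _ (a + b).+1) ?addnS ?addSn //=.
under eq_bigr do rewrite !mul1n !mulrnDr.
rewrite !big_split /=.
rewrite (@sum_delannoy_widen _ (fun k => ('X - 1) ^+ ((a + b).+1 - k)) a b (a + b).+2)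
  //.
have -> : \sum_(k < (a + b).+1) ('X - 1) ^+ ((a + b).+1 - k) *+ delannoy k a b
          = ('X - 1) * delannoy_poly a b.
  rewrite mulr_sumr; apply: eq_bigr => k _.
  by rewrite subSn ?exprS ?mulrnAr // -ltnS.
by rewrite /delannoy_poly addnS addSn.
Qed.

Definition binprod_poly a b : {poly int} :=
  \poly_(m < a.+1) ('C(a, m) * 'C(b, m))%:R.

Lemma coef_binprod_poly a b m : (binprod_poly a b)`_m = ('C(a, m) * 'C(b, m))%:R.
Proof. by rewrite coef_poly; case: ltnP => // h; rewrite bin_small. Qed.

Lemma binprod_poly0n b : binprod_poly 0 b = 1.
Proof. by apply/polyP => -[|m]; rewrite coef_binprod_poly coef1 ?bin0. Qed.

Lemma binprod_polyn0 a : binprod_poly a 0 = 1.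
Proof. by apply/polyP => -[|m]; rewrite coef_binprod_poly coef1 ?bin0 // muln0. Qed.

Lemma binprod_polySS a b :
  binprod_poly a.+1 b.+1
  = binprod_poly a b.+1 + binprod_poly a.+1 b + ('X - 1) * binprod_poly a b.
Proof.
apply/polyP => m; rewrite mulrBl mul1r !coefD coefN coefXM !coef_binprod_poly.
by case: m => [|m] /=; rewrite ?bin0 ?binS !natrM ?natrD; ring.
Qed.

Lemma delannoy_polyE a b : delannoy_poly a b = binprod_poly a b.
Proof.
elim: a b => [|a IHa]; elim=> [|b IHb].
- by rewrite delannoy_poly00 binprod_poly0n.
- by rewrite delannoy_poly0S IHb !binprod_poly0n.
- by rewrite delannoy_polyS0 IHa !binprod_polyn0.
- by rewrite delannoy_polySS binprod_polySS IHb !IHa.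
Qed.

Lemma binprod_polyE a b :
  binprod_poly a b = \sum_(m < (minn a b).+1) ('C(a, m) * 'C(b, m))%:R * 'X^m.
Proof.
rewrite /binprod_poly poly_def.
rewrite (big_ord_widen a.+1 (fun m => ('C(a, m) * 'C(b, m))%:R * 'X^m))
  ?ltnS ?geq_minl //.
rewrite [RHS]big_mkcond /=; apply: eq_bigr => m _; rewrite scaler_nat.
case: ltnP => hm; first by rewrite mulr_natl.
have [h|h] : (a < m \/ b < m)%N by lia.
- by rewrite bin_small ?mul0n.
- by rewrite (@bin_small b) ?muln0.
Qed.

Theorem mainTheorem16 (r s : nat) (hr : (1 <= r)%N) (hs : (1 <= s)%N) :
  \sum_(l < (r * s).+1)
     \sum_(c : l.-tuple ('I_r * 'I_s) | is_maximal_cell c)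
        ('X - 1) ^+ (r + s - l - 1)
  = \sum_(m < (minn r.-1 s.-1).+1)
        ('C(r.-1, m) * 'C(s.-1, m))%:R * 'X^m :> {poly int}.
Proof.
rewrite -binprod_polyE -delannoy_polyE /delannoy_poly.
have count_cells (l : nat) (w : {poly int}) :
    \sum_(c : l.-tuple ('I_r * 'I_s) | is_maximal_cell c) w
    = w *+ \sum_(c : l.-tuple ('I_r * 'I_s)) is_maximal_cell c.
  by rewrite -sumrMnr big_mkcond; apply: eq_bigr => c _; case: ifP.
under eq_bigr => l _ do rewrite count_cells.
rewrite big_ord_recl nmaximal_cells0 // add0r.
under eq_bigr => k _ do rewrite nmaximal_cellsS //.
rewrite -(@sum_delannoy_widen _ (fun k => ('X - 1) ^+ (r.-1 + s.-1 - k)) _ _ (r * s));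
  last by nia.
apply: eq_bigr => k _; congr (_ ^+ _ *+ _); rewrite /= /bump /= add1n; lia.
Qed.
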